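(* Let $\mathcal{H}_0,\mathcal{H}_1,\mathcal{H}_2$ be finite-dimensional Hilbert spaces, and let $\varrho_{1|0}\in\mathcal{L}(\mathcal{H}_0\otimes\mathcal{H}_1)$, $\varrho_{2|0}\in\mathcal{L}(\mathcal{H}_0\otimes\mathcal{H}_2)$ be the Choi–Jamiołkowski operators of CPTP maps $\mathcal{N}_{1|0}:\mathcal{L}(\mathcal{H}_0)\to\mathcal{L}(\mathcal{H}_1)$ and $\mathcal{N}_{2|0}:\mathcal{L}(\mathcal{H}_0)\to\mathcal{L}(\mathcal{H}_2)$. Consider the optimization problem $$\sup\ \mathrm{Tr}[W\varrho_{2|0}]+\mathrm{Tr}[\Lambda]$$ over $W\in\mathcal{L}(\mathcal{H}_0\otimes\mathcal{H}_2)$, $\Psi_0,\Psi_1\in\mathcal{L}(\mathcal{H}_0)$, $\Lambda\in\mathcal{L}(\mathcal{H}_1)$ subject to $$\begin{bmatrix}\Psi_0\otimes\mathbb{1}_{\mathcal{H}_2} & W\\ W^\dagger & \Psi_1\otimes\mathbb{1}_{\mathcal{H}_2}\end{bmatrix}\geq 0,\qquad \mathrm{Tr}[\Psi_0]=\mathrm{Tr}[\Psi_1]=1,$$ $$\Lambda\otimes\mathbb{1}_{\mathcal{H}_2}\leq-\mathrm{Tr}_{\mathcal{H}_0}\!\left[\big((\varrho_{1|0})^{T_{\mathcal{H}_1}}\otimes\mathbb{1}_{\mathcal{H}_2}\big)\big(W\otimes\mathbb{1}_{\mathcal{H}_1}\big)\right].$$ If there exists a CPTP map $\mathcal{N}_{2|1}:\mathcal{L}(\mathcal{H}_1)\to\mathcal{L}(\mathcal{H}_2)$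 with $\mathcal{N}_{2|0}=\mathcal{N}_{2|1}\circ\mathcal{N}_{1|0}$, then every feasible point $(W,\Psi_0,\Psi_1,\Lambda)$ satisfies $\mathrm{Tr}[W\varrho_{2|0}]+\mathrm{Tr}[\Lambda]\leq 0$; i.e. the optimal value of the problem is at most $0$.
   Context: Fix orthonormal bases of all Hilbert spaces; transpositions are with respect to them. For a linear map $\mathcal{N}:\mathcal{L}(\mathcal{H}_{\rm in})\to\mathcal{L}(\mathcal{H}_{\rm out})$, its Choi–Jamiołkowski operator is $\varrho_{\mathcal{N}}=\sum_{a,b}|a\rangle\langle b|\otimes\mathcal{N}(|a\rangle\langle b|)\in\mathcal{L}(\mathcal{H}_{\rm in}\otimes\mathcal{H}_{\rm out})$. $T_{\mathcal{H}_1}$ is partial transposition on the $\mathcal{H}_1$ factor; $(\varrho_{1|0})^{T_{\mathcal{H}_1}}\otimes\mathbb{1}_{\mathcal{H}_2}$ and $W\otimes\mathbb{1}_{\mathcal{H}_1}$ (meaning $W$ acting on the $\mathcal{H}_0\otimes\mathcal{H}_2$ factors and the identity on $\mathcal{H}_1$) are regarded as operators on $\mathcal{H}_0\otimes\mathcal{H}_1\otimes\mathcal{H}_2$, and $\mathrm{Tr}_{\mathcal{H}_0}$ is the partial trace over $\mathcal{H}_0$, giving an operator on $\mathcal{H}_1\otimes\mathcal{H}_2$. Operator inequalities $A\le B$ mean $B-A$ is Hermitian positive semidefinite. *)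

(* Scalars: an arbitrary numClosedFieldType C (e.g. algC or
   complex R), with its partial order (0 <= z  iff  z is real and nonnegative). *)
From HB Require Import structures.
From mathcomp Require Import all_boot all_order all_algebra.

Set Implicit Arguments.
Unset Strict Implicit.
Unset Printing Implicit Defensive.

Import Order.TTheory GRing.Theory Num.Theory Num.Def.
Local Open Scope ring_scope.

Section QDefs.
Variable C : numClosedFieldType.

Definition dagger m n (A : 'M[C]_(m, n)) : 'M[C]_(n, m) := (map_mx conjC A)^T.

Definition psd n (A : 'M[C]_n) : Prop :=
  A = dagger A /\ forall u : 'rV[C]_n, 0 <= (u *m A *m dagger u) 0 0.

Definition opLe n (A B : 'M[C]_n) : Prop := psd (B - A).

(* Tensor index conventions: the basis of H_a (x) H_b (dims m, n) is indexed
   by 'I_(m * n), the pair (i, j) being  mxvec_index i j.  These are its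
   two components. *)
Definition idx1 m n (k : 'I_(m * n)) : 'I_m :=
  (enum_val (cast_ord (esym (mxvec_cast m n)) k)).1.
Definition idx2 m n (k : 'I_(m * n)) : 'I_n :=
  (enum_val (cast_ord (esym (mxvec_cast m n)) k)).2.

Definition kron m n (A : 'M[C]_m) (B : 'M[C]_n) : 'M[C]_(m * n) :=
  \matrix_(k, l) (A (idx1 k) (idx1 l) * B (idx2 k) (idx2 l)).

Definition ptrace1 m n (X : 'M[C]_(m * n)) : 'M[C]_n :=
  \matrix_(j, j') \sum_(i < m) X (mxvec_index i j) (mxvec_index i j').

Definition ptransp2 m n (X : 'M[C]_(m * n)) : 'M[C]_(m * n) :=
  \matrix_(k, l) X (mxvec_index (idx1 k) (idx2 l)) (mxvec_index (idx1 l) (idx2 k)).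

(* (id_k (x) N)(X): N applied blockwise to X in L(C^k (x) H_in). *)
Definition ampl k din dout (N : 'M[C]_din -> 'M[C]_dout)
    (X : 'M[C]_(k * din)) : 'M[C]_(k * dout) :=
  \matrix_(p, q)
    (N (\matrix_(a, b) X (mxvec_index (idx1 p) a) (mxvec_index (idx1 q) b)))
      (idx2 p) (idx2 q).

Definition CP din dout (N : 'M[C]_din -> 'M[C]_dout) : Prop :=
  forall (k : nat) (X : 'M[C]_(k * din)), psd X -> psd (ampl N X).
Definition TP din dout (N : 'M[C]_din -> 'M[C]_dout) : Prop :=
  forall X : 'M[C]_din, \tr (N X) = \tr X.
Definition CPTP din dout (N : {linear 'M[C]_din -> 'M[C]_dout}) : Prop :=
  CP N /\ TP N.

Definition choi din dout (N : 'M[C]_din -> 'M[C]_dout) : 'M[C]_(din * dout) :=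
  \sum_(a < din) \sum_(b < din) kron (delta_mx a b) (N (delta_mx a b)).

(* Operators on H0 (x) (H1 (x) H2), index mxvec_index a (mxvec_index b c). *)
Definition mx3 d0 d1 d2
    (f : 'I_d0 -> 'I_d1 -> 'I_d2 -> 'I_d0 -> 'I_d1 -> 'I_d2 -> C)
    : 'M[C]_(d0 * (d1 * d2)) :=
  \matrix_(k, l) f (idx1 k) (idx1 (idx2 k)) (idx2 (idx2 k))
                   (idx1 l) (idx1 (idx2 l)) (idx2 (idx2 l)).

(* X (x) 1_{H2}, for X on H0 (x) H1. *)
Definition ext01 d0 d1 d2 (X : 'M[C]_(d0 * d1)) : 'M[C]_(d0 * (d1 * d2)) :=
  mx3 (fun a b c a' b' c' =>
         X (mxvec_index a b) (mxvec_index a' b') * (c == c')%:R).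

(* W (x) 1_{H1}, for W on H0 (x) H2 (identity on the middle factor H1). *)
Definition ext02 d0 d1 d2 (W : 'M[C]_(d0 * d2)) : 'M[C]_(d0 * (d1 * d2)) :=
  mx3 (fun a b c a' b' c' =>
         W (mxvec_index a c) (mxvec_index a' c') * (b == b')%:R).

End QDefs.

(* Only the operator inequality and the factorisation N20 = N21 o N10 are used.
   The inequality says that the gap D := -Tr_0[...] - Lambda (x) 1 is positive
   semidefinite, so pairing it with the Choi operator of the completely positive
   map N21 gives 0 <= Tr[D rho21].  Pairing with a Choi operator reads
   Tr[X rho_N] = sum_{c,c'} N(X_{c'c}^T)_{cc'}, where X_{c'c} is the block of X
   at H2 indices (c', c).  The blocks of the link term are N10 applied to
   the blocks of W, so it pairs with rho21 to Tr[W rho20]; and Lambda (x) 1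
   pairs to Tr Lambda because N21 is trace preserving. *)

From HB Require Import structures.
From mathcomp Require Import all_boot all_order all_algebra.
Import Order.TTheory GRing.Theory Num.Theory Num.Def.
Local Open Scope ring_scope.
Set Implicit Arguments.
Unset Strict Implicit.
Unset Printing Implicit Defensive.

Section ChoiPairing.
Variable C : numClosedFieldType.

Lemma idx1E m n (i : 'I_m) (j : 'I_n) : idx1 (mxvec_index i j) = i.
Proof. by rewrite /idx1 /mxvec_index cast_ordK enum_rankK. Qed.

Lemma idx2E m n (i : 'I_m) (j : 'I_n) : idx2 (mxvec_index i j) = j.
Proof. by rewrite /idx2 /mxvec_index cast_ordK enum_rankK. Qed.

Lemma mxvec_index_idx m n (k : 'I_(m * n)) : mxvec_index (idx1 k) (idx2 k) = k.
Proof. by case/mxvec_indexP: k => i j; rewrite idx1E idx2E. Qed.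

Lemma big_mxvec_index m n (F : 'I_(m * n) -> C) :
  \sum_k F k = \sum_(i < m) \sum_(j < n) F (mxvec_index i j).
Proof.
rewrite (reindex (uncurry (@mxvec_index m n))) /=; last exact: curry_mxvec_bij.
by rewrite pair_big /=; apply: eq_bigr => -[i j].
Qed.

Lemma sum_kronecker_l n (c : 'I_n) (F : 'I_n -> C) : \sum_x (c == x)%:R * F x = F c.
Proof.
rewrite (bigD1 c) //= big1 ?eqxx ?mul1r ?addr0 // => x xc.
by rewrite eq_sym (negbTE xc) mul0r.
Qed.

Lemma kronE m n (A : 'M[C]_m) (B : 'M[C]_n) i j k l :
  kron A B (mxvec_index i j) (mxvec_index k l) = A i k * B j l.
Proof. by rewrite mxE !idx1E !idx2E. Qed.

Lemma ptransp2E m n (X : 'M[C]_(m * n)) i j k l :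
  ptransp2 X (mxvec_index i j) (mxvec_index k l) = X (mxvec_index i l) (mxvec_index k j).
Proof. by rewrite mxE !idx1E !idx2E. Qed.

Lemma ext01E d0 d1 d2 (X : 'M[C]_(d0 * d1)) a b c a' b' c' :
  ext01 d2 X (mxvec_index a (mxvec_index b c)) (mxvec_index a' (mxvec_index b' c'))
  = X (mxvec_index a b) (mxvec_index a' b') * (c == c')%:R.
Proof. by rewrite mxE !(idx1E, idx2E). Qed.

Lemma ext02E d0 d1 d2 (W : 'M[C]_(d0 * d2)) a b c a' b' c' :
  ext02 d1 W (mxvec_index a (mxvec_index b c)) (mxvec_index a' (mxvec_index b' c'))
  = W (mxvec_index a c) (mxvec_index a' c') * (b == b')%:R.
Proof. by rewrite mxE !(idx1E, idx2E). Qed.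

Lemma choiE din dout (N : 'M[C]_din -> 'M[C]_dout) i j k l :
  choi N (mxvec_index i j) (mxvec_index k l) = N (delta_mx i k) j l.
Proof.
rewrite /choi summxE (bigD1 i) //= [X in _ + X]big1 => [|a ai]; last first.
  rewrite summxE big1 // => b _.
  by rewrite kronE mxE (eq_sym i) (negbTE ai) mul0r.
rewrite addr0 summxE (bigD1 k) //= big1 => [|b bk]; last first.
  by rewrite kronE mxE (eq_sym k) (negbTE bk) andbF mul0r.
by rewrite kronE mxE !eqxx mul1r addr0.
Qed.

Lemma linear_entryE din dout (N : {linear 'M[C]_din -> 'M[C]_dout}) (X : 'M[C]_din) j l :
  N X j l = \sum_(a < din) \sum_(b < din) X a b * N (delta_mx a b) j l.
Proof.
rewrite {1}[X]matrix_sum_delta linear_sum summxE; apply: eq_bigr => a _.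
by rewrite linear_sum summxE; apply: eq_bigr => b _; rewrite linearZ mxE.
Qed.

Lemma mxtrace_mulmx_choiE d1 d2 (N : {linear 'M[C]_d1 -> 'M[C]_d2})
    (X : 'M[C]_(d1 * d2)) :
  \tr (X *m choi N) = \sum_(c < d2) \sum_(c' < d2)
    N (\matrix_(a, b) X (mxvec_index b c') (mxvec_index a c)) c c'.
Proof.
under [RHS]eq_bigr => c _ do under eq_bigr => c' _ do rewrite linear_entryE.
under [RHS]eq_bigr => c _ do under eq_bigr => c' _ do rewrite exchange_big.
under [RHS]eq_bigr => c _ do rewrite exchange_big.
rewrite [RHS]exchange_big; under [RHS]eq_bigr => b _ do rewrite exchange_big.
rewrite /mxtrace big_mxvec_index; apply: eq_bigr => b _; apply: eq_bigr => c' _.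
rewrite mxE big_mxvec_index exchange_big; apply: eq_bigr => a _; apply: eq_bigr => c _.
by rewrite mxE choiE.
Qed.

Lemma quad_formE n (u : 'rV[C]_n) (A : 'M[C]_n) :
  (u *m A *m dagger u) 0 0 = \sum_p \sum_q u 0 p * A p q * (u 0 q)^*.
Proof.
rewrite mxE exchange_big; apply: eq_bigr => q _.
by rewrite mxE mulr_suml; apply: eq_bigr => p _; rewrite /dagger !mxE.
Qed.

Definition tensor_swap m n (k : 'I_(m * n)) : 'I_(n * m) :=
  mxvec_index (idx2 k) (idx1 k).

Lemma tensor_swapK m n : cancel (@tensor_swap m n) (@tensor_swap n m).
Proof. by move=> k; rewrite /tensor_swap idx1E idx2E mxvec_index_idx. Qed.

Lemma psd_swap_trmx m n (D : 'M[C]_(m * n)) : psd D ->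
  psd (\matrix_(p, q) D (tensor_swap q) (tensor_swap p) : 'M[C]_(n * m)).
Proof.
have swap_onto : {on [pred _ | true], bijective (@tensor_swap n m)}.
  by exists (@tensor_swap m n) => k _; rewrite tensor_swapK.
move=> [D_herm D_quad]; split.
  by apply/matrixP => p q; rewrite {1}D_herm /dagger !mxE.
move=> u; pose w : 'rV[C]_(m * n) := \row_k (u 0 (tensor_swap k))^*.
rewrite -[X in 0 <= X](_ : (w *m D *m dagger w) 0 0 = _); first exact: D_quad.
rewrite !quad_formE exchange_big (reindex _ swap_onto); apply: eq_bigr => p _.
rewrite (reindex _ swap_onto); apply: eq_bigr => q _.
by rewrite !mxE !tensor_swapK conjCK [LHS]mulrC [_^* * _]mulrC mulrA.
Qed.

Definition maxent n : 'rV[C]_(n * n) := \row_p (idx1 p == idx2 p)%:R.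

Lemma maxent_quadE n (Z : 'M[C]_(n * n)) :
  (maxent n *m Z *m dagger (maxent n)) 0 0
  = \sum_(c < n) \sum_(c' < n) Z (mxvec_index c c) (mxvec_index c' c').
Proof.
rewrite quad_formE big_mxvec_index; apply: eq_bigr => c _.
rewrite (bigD1 c) //= [X in _ + X]big1 => [|j cj]; last first.
  by rewrite big1 // => q _; rewrite mxE idx1E idx2E (eq_sym c) (negbTE cj) !mul0r.
rewrite addr0 big_mxvec_index; apply: eq_bigr => c' _.
rewrite (bigD1 c') //= [X in _ + X]big1 => [|j cj]; last first.
  by rewrite !mxE !idx1E !idx2E (eq_sym c') (negbTE cj) conjC0 mulr0.
by rewrite !mxE !idx1E !idx2E !eqxx conjC1 mulr1 mul1r addr0.
Qed.

(* [Tr (D choi N)] is the expectation, in the unnormalised maximally entangled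
   vector, of [(id (x) N)] applied to the factor-swapped transpose of [D];
   this is where complete positivity of [N] enters. *)
Lemma mxtrace_mulmx_choi_ge0 d1 d2 (N : {linear 'M[C]_d1 -> 'M[C]_d2})
    (D : 'M[C]_(d1 * d2)) :
  CP N -> psd D -> 0 <= \tr (D *m choi N).
Proof.
move=> N_CP D_psd; have [_ /(_ (maxent d2))] := N_CP _ _ (psd_swap_trmx D_psd).
rewrite maxent_quadE mxtrace_mulmx_choiE.
by under eq_bigr => c _ do under eq_bigr => c' _ do
  (rewrite mxE !idx1E !idx2E;
   under eq_mx => a b do rewrite mxE /tensor_swap !idx1E !idx2E).
Qed.

Lemma mxtrace_kron1_choi d1 d2 (N : {linear 'M[C]_d1 -> 'M[C]_d2}) (A : 'M[C]_d1) :
  TP N -> \tr (kron A (1%:M : 'M[C]_d2) *m choi N) = \tr A.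
Proof.
move=> N_TP.
have blockE c c' : \matrix_(a, b) kron A 1%:M (mxvec_index b c') (mxvec_index a c)
                   = (c' == c)%:R *: A^T :> 'M[C]_d1.
  by apply/matrixP => a b; rewrite mxE kronE !mxE mulrC.
rewrite mxtrace_mulmx_choiE -[RHS]mxtrace_tr -N_TP; apply: eq_bigr => c _.
by under eq_bigr => c' _ do rewrite blockE linearZ mxE eq_sym; rewrite sum_kronecker_l.
Qed.

Lemma ptrace_link_block d0 d1 d2 (N : {linear 'M[C]_d0 -> 'M[C]_d1})
    (W : 'M[C]_(d0 * d2)) c c' :
  \matrix_(a, b) ptrace1 (ext01 d2 (ptransp2 (choi N)) *m ext02 d1 W)
                   (mxvec_index b c') (mxvec_index a c)
  = N (\matrix_(i, i') W (mxvec_index i' c') (mxvec_index i c)).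
Proof.
apply/matrixP => a b; rewrite !mxE linear_entryE; apply: eq_bigr => i _.
rewrite mxE big_mxvec_index; apply: eq_bigr => i' _.
rewrite big_mxvec_index.
under eq_bigr => b2 _ do under eq_bigr => c2 _ do
  rewrite ext01E ext02E mulrACA mulrC -mulrA.
under eq_bigr => b2 _ do rewrite sum_kronecker_l eq_sym.
by rewrite sum_kronecker_l ptransp2E choiE mxE mulrC.
Qed.

Lemma mxtrace_link_choi d0 d1 d2 (N10 : {linear 'M[C]_d0 -> 'M[C]_d1})
    (N21 : {linear 'M[C]_d1 -> 'M[C]_d2}) (N20 : {linear 'M[C]_d0 -> 'M[C]_d2})
    (W : 'M[C]_(d0 * d2)) :
  N20 =1 N21 \o N10 ->
  \tr (ptrace1 (ext01 d2 (ptransp2 (choi N10)) *m ext02 d1 W) *m choi N21)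
  = \tr (W *m choi N20).
Proof.
move=> N20E; rewrite !mxtrace_mulmx_choiE; apply: eq_bigr => c _.
by apply: eq_bigr => c' _; rewrite ptrace_link_block N20E.
Qed.

End ChoiPairing.

Unset Implicit Arguments.

Theorem mainTheorem3 (C : numClosedFieldType) (d0 d1 d2 : nat)
  (N10 : {linear 'M[C]_d0 -> 'M[C]_d1})
  (N20 : {linear 'M[C]_d0 -> 'M[C]_d2}) :
  CPTP N10 -> CPTP N20 ->
  (exists N21 : {linear 'M[C]_d1 -> 'M[C]_d2},
      CPTP N21 /\ (forall X : 'M[C]_d0, N20 X = N21 (N10 X))) ->
  forall (W : 'M[C]_(d0 * d2)) (Psi0 Psi1 : 'M[C]_d0) (Lambda : 'M[C]_d1),
    psd (block_mx (kron Psi0 (1%:M : 'M[C]_d2)) W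
                  (dagger W) (kron Psi1 (1%:M : 'M[C]_d2))) ->
    \tr Psi0 = 1 -> \tr Psi1 = 1 ->
    opLe (kron Lambda (1%:M : 'M[C]_d2))
         (- ptrace1 (ext01 d2 (ptransp2 (choi N10)) *m ext02 d1 W)) ->
    \tr (W *m choi N20) + \tr Lambda <= 0.
Proof.
move=> _ _ [N21 [[N21_CP N21_TP] N20E]] W Psi0 Psi1 Lambda _ _ _ gap_psd.
have := mxtrace_mulmx_choi_ge0 N21_CP gap_psd.
rewrite mulmxBl mulNmx linearB linearN /= (mxtrace_link_choi _ N20E).
by rewrite mxtrace_kron1_choi // -opprD oppr_ge0.
Qed.
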